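(* Let $A,B\in\mathrm{GL}(\mathcal S)$ satisfy $A|_{\Delta_0}=B|_{\Delta_0}$. Then $A=B$.
   Context: Work over an algebraically closed field of characteristic $\neq2$. $F(X)=\sum_{i=0}^6f_iX^i$, $f_6\neq0$, distinct roots $\theta_1,\dots,\theta_6$. $P_j(X)=\prod_{i\ne j}(X-\theta_i)$, $\omega_j=P_j(\theta_j)$. Points of $\mathbb P^5$ are identified with $P(X)=\sum_{j=0}^5p_jX^j$; $\pi_j=P(\theta_j)/\omega_j$. $\mathcal S\subset\mathbb P^5$ is the smooth surface defined by $\sum_j\theta_j^i\omega_j\pi_j^2=0$, $i=0,1,2$. $\varepsilon^{(i)}$ is the involution $\pi_j\mapsto(-1)^{\delta_{ij}}\pi_j$; $\mathrm{Inv}(\mathcal S)$ is the group of order 32 generated by them. $\Delta_0=\{(p_0:p_1:0:0:0:0)\}$, $\Delta_i=\varepsilon^{(i)}(\Delta_0)$, $\Delta_{ij}=\varepsilon^{(i)}\varepsilon^{(j)}(\Delta_0)$, $\Delta_{ijk}=\varepsilon^{(i)}\varepsilon^{(j)}\varepsilon^{(k)}(\Delta_0)$; these are 32 lines and it is known that they are all the lines on $\mathcal S$. $\mathrm{GL}(\mathcal S)$ denotes the group of automorphisms of $\mathcal S$ which are restrictions of projective linear transformations of $\mathbb P^5$. *)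

From HB Require Import structures.
From mathcomp Require Import all_boot all_order all_algebra all_field.
Set Implicit Arguments. Unset Strict Implicit. Unset Printing Implicit Defensive.
Import GRing.Theory.
Local Open Scope ring_scope.

Section Defs.
Variable K : closedFieldType.

(* theta : the six distinct roots theta_1..theta_6 of F (indexed 'I_6) *)
Definition omega (theta : 'I_6 -> K) (j : 'I_6) : K :=
  \prod_(i < 6 | i != j) (theta j - theta i).

(* a point of P^5 is represented by a row vector p = (p_0,...,p_5),
   identified with P(X) = sum_j p_j X^j *)
Definition Peval (p : 'rV[K]_6) (x : K) : K := \sum_(j < 6) p 0 j * x ^+ j.

Definition piS (theta : 'I_6 -> K) (p : 'rV[K]_6) (j : 'I_6) : K :=
  Peval p (theta j) / omega theta j.

Definition onS (theta : 'I_6 -> K) (p : 'rV[K]_6) : Prop :=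
  p != 0 /\ forall i : 'I_3,
    \sum_(j < 6) theta j ^+ i * omega theta j * piS theta p j ^+ 2 = 0.

Definition onDelta0 (p : 'rV[K]_6) : Prop :=
  p != 0 /\ forall j : 'I_6, (2 <= j)%N -> p 0 j = 0.

Definition projeq (p q : 'rV[K]_6) : Prop :=
  exists c : K, c != 0 /\ q = c *: p.

(* M induces (by p |-> p M) a projective linear transformation of P^5
   whose restriction is an automorphism of S, i.e. M(S) = S *)
Definition inGLS (theta : 'I_6 -> K) (M : 'M[K]_6) : Prop :=
  M \in unitmx /\ forall p : 'rV[K]_6, onS theta p <-> onS theta (p *m M).
End Defs.

From HB Require Import structures.
From mathcomp Require Import all_boot all_order all_algebra all_field.
From mathcomp Require Import ring.
Import GRing.Theory.
Local Open Scope ring_scope.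

(* Let G = B A^-1; it maps S onto S and fixes Delta_0 pointwise (projectively),
   and we show that G is a scalar matrix, whence A and B agree on every point.
   The proof works in the coordinates pi_j = P(theta_j)/omega_j, i.e. after
   conjugating G by the invertible matrix V with p V = (pi_0, ..., pi_5).
   There S is cut out by the three diagonal quadrics
   Q_k(pi) = sum_j theta_j^k omega_j pi_j^2, k = 0, 1, 2.
   1. Diagonal bilinear forms: polarization, and nondegeneracy.
   2. The Lagrange identity sum_j theta_j^k / omega_j = 0 (k < 5) shows that
      every point with pi_j = +-1/omega_j lies on S.
   3. Applying the conjugated matrix H to these 32 points and polarizing shows
      that the rows of H are pairwise orthogonal for Q_0, Q_1, Q_2; with
      nondegeneracy this forces every row of H to be an eigenvector of
      diag(theta), so H is a monomial matrix.
   4. The points X - theta_j and 1 of Delta_0 then force H to be scalar. *)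

Section DiagonalForms.
Context {F : fieldType} {n : nat} {d : 'I_n -> F}.

Definition dform (v w : 'rV[F]_n) : F := \sum_j d j * v 0 j * w 0 j.

Lemma dformC v w : dform v w = dform w v.
Proof. by apply: eq_bigr => j _; rewrite mulrAC. Qed.

Lemma dformDr u v w : dform u (v + w) = dform u v + dform u w.
Proof. by rewrite /dform -big_split; apply: eq_bigr => j _; rewrite mxE mulrDr. Qed.

Lemma dformZr c v w : dform v (c *: w) = c * dform v w.
Proof. by rewrite /dform mulr_sumr; apply: eq_bigr => j _; rewrite mxE mulrCA. Qed.

Lemma dformZl c v w : dform (c *: v) w = c * dform v w.
Proof. by rewrite dformC dformZr dformC. Qed.

Lemma dformNr v w : dform v (- w) = - dform v w.
Proof. by rewrite -scaleN1r dformZr mulN1r. Qed.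

Lemma dform_suml (I : finType) (f : I -> 'rV[F]_n) w :
  dform (\sum_i f i) w = \sum_i dform (f i) w.
Proof.
rewrite /dform exchange_big; apply: eq_bigr => j _.
by rewrite summxE mulr_sumr mulr_suml.
Qed.

Lemma dform_polarize x y : (2%:R : F) != 0 ->
  dform (y + x) (y + x) = 0 -> dform (y - x) (y - x) = 0 -> dform y x = 0.
Proof.
move=> h2 hp hm.
have : dform (y + x) (y + x) - dform (y - x) (y - x) = dform y x *+ 4.
  rewrite /dform -sumrB -sumrMnl; apply: eq_bigr => j _.
  by rewrite !mxE; ring.
rewrite hp hm subrr => /esym /eqP.
rewrite -mulr_natr mulf_eq0 => /orP [/eqP //|].
by rewrite (natrM F 2 2) mulf_eq0 (negbTE h2).
Qed.

Lemma dform_orth_signs x y z : (2%:R : F) != 0 ->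
  (forall s t : bool, let u := z + (-1) ^+ t *: y + (-1) ^+ s *: x in dform u u = 0) ->
  dform x y = 0.
Proof.
move=> h2 hQ.
have hzy (t : bool) : dform x (z + (-1) ^+ t *: y) = 0.
  rewrite dformC; apply: dform_polarize h2 _ _.
    by have := hQ false t; rewrite /= expr0 scale1r.
  by have := hQ true t; rewrite /= expr1 scaleN1r.
have := hzy false; have := hzy true.
rewrite !dformDr !dformZr expr1 expr0 mul1r mulN1r => hm hp.
have : dform x y *+ 2 = (dform x z + dform x y) - (dform x z + - dform x y) by ring.
rewrite hp hm subrr => /eqP.
by rewrite -mulr_natr mulf_eq0 (negbTE h2) orbF => /eqP.
Qed.

Lemma dform_nondeg (H : 'M[F]_n) w : (forall j, d j != 0) -> H \in unitmx ->
  (forall i, dform (row i H) w = 0) -> w = 0.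
Proof.
move=> d0 hH hw.
have hv v : dform v w = 0.
  rewrite -(mulmxKV hH v) mulmx_sum_row dform_suml big1 // => i _.
  by rewrite dformZl hw mulr0.
apply/rowP => j; have := hv (delta_mx 0 j).
rewrite /dform (bigD1 j) //= big1 => [|i hij]; last by rewrite mxE (negbTE hij) andbF mulr0 mul0r.
rewrite addr0 !mxE !eqxx mulr1 => /eqP.
by rewrite mulf_eq0 (negbTE (d0 j)) => /eqP.
Qed.

End DiagonalForms.

Arguments dform {F n} d v w.

Lemma poly_vanish_eq0 {R : idomainType} {n : nat} {x : 'I_n -> R} {p : {poly R}} :
  injective x -> (size p <= n)%N -> (forall i, p.[x i] = 0) -> p = 0.
Proof.
move=> xinj hs hp; apply/eqP; apply: contraTT hs => p0; rewrite -ltnNge.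
have := max_poly_roots p0 (rs := [seq x i | i <- enum 'I_n]).
rewrite size_map size_enum_ord map_inj_uniq ?enum_uniq //; apply => //.
by apply/allP => _ /mapP [i _ ->]; rewrite /root hp.
Qed.

Section Surface.
Context {K : closedFieldType} {theta : 'I_6 -> K}.
Hypothesis theta_inj : injective theta.

Lemma omega_neq0 j : omega theta j != 0.
Proof.
apply/prodf_neq0 => i hij; rewrite subr_eq0.
by apply: contra hij => /eqP /theta_inj ->.
Qed.

Definition lagrange (j : 'I_6) : {poly K} := \prod_(i < 6 | i != j) ('X - (theta i)%:P).

Lemma horner_lagrange j m :
  (lagrange j).[theta m] = if m == j then omega theta j else 0.
Proof.
rewrite horner_prod; under eq_bigr do rewrite hornerXsubC.
case: eqVneq => [-> //|hmj].
by rewrite (bigD1 m) //= subrr mul0r.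
Qed.

Lemma size_lagrange j : size (lagrange j) = 6%N.
Proof.
rewrite /lagrange -big_filter size_prod_XsubC size_filter.
transitivity (#|predC1 j|).+1; last by rewrite cardC1 card_ord.
by rewrite cardE /enum_mem size_filter.
Qed.

Lemma coef5_lagrange j : (lagrange j)`_5 = 1.
Proof.
have /monicP := monic_prod_XsubC (index_enum 'I_6) (predC1 j) theta.
by rewrite lead_coefE size_lagrange.
Qed.

(* The Lagrange identity, obtained by comparing the coefficients of X^5 in X^k
   and in its Lagrange interpolant at the theta_j. *)
Lemma sum_pow_omega k : (k < 6)%N -> \sum_j theta j ^+ k / omega theta j = (k == 5)%:R.
Proof.
move=> hk; pose L := \sum_j (theta j ^+ k / omega theta j) *: lagrange j.
have hL m : L.[theta m] = theta m ^+ k.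
  rewrite horner_sum (bigD1 m) //= big1 => [|j hj]; last first.
    by rewrite hornerZ horner_lagrange eq_sym (negbTE hj) mulr0.
  by rewrite addr0 hornerZ horner_lagrange eqxx divfK ?omega_neq0.
have /eqP : L - 'X^k = 0.
  apply: (poly_vanish_eq0 theta_inj) => [|m]; last first.
    by rewrite hornerD hornerN hornerXn hL subrr.
  rewrite (leq_trans (size_polyD _ _)) // geq_max size_polyN size_polyXn hk andbT.
  rewrite (leq_trans (size_sum _ _ _)) //; apply/bigmax_leqP => j _.
  by rewrite (leq_trans (size_scale_leq _ _)) ?size_lagrange.
rewrite subr_eq0 => /eqP /(congr1 (fun p : {poly K} => p`_5)).
rewrite coefXn coef_sum eq_sym => <-.
by apply: eq_bigr => j _; rewrite coefZ coef5_lagrange mulr1.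
Qed.

Definition piMx : 'M[K]_6 := \matrix_(i, j) (theta j ^+ i / omega theta j).

Lemma piMxE p j : (p *m piMx) 0 j = piS theta p j.
Proof.
rewrite mxE /piS /Peval mulr_suml; apply: eq_bigr => i _.
by rewrite mxE mulrA.
Qed.

(* V is invertible: p V = 0 means that P(X) vanishes at the six roots. *)
Lemma piMx_unit : piMx \in unitmx.
Proof.
rewrite unitmxE unitfE; apply/negP => /det0P [v v0 vV0].
pose P : {poly K} := \poly_(i < 6) v 0 (inord i).
suff P0 : P = 0.
  move/negP: v0; apply; apply/eqP/rowP => j.
  by have := congr1 (fun p : {poly K} => p`_j) P0; rewrite coef_poly ltn_ord coef0 inord_val mxE.
apply: (poly_vanish_eq0 theta_inj) => [|m]; first exact: size_poly.
have := congr1 (fun w : 'rV_6 => w 0 m) vV0; rewrite /= piMxE mxE /piS.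
move/eqP; rewrite mulf_eq0 invr_eq0 (negbTE (omega_neq0 m)) orbF => /eqP <-.
by rewrite horner_poly; apply: eq_bigr => i _; rewrite inord_val.
Qed.

Definition wS (k : nat) (j : 'I_6) : K := theta j ^+ k * omega theta j.

Lemma wS0_neq0 j : wS 0 j != 0.
Proof. by rewrite /wS mul1r omega_neq0. Qed.

Definition onSpi (w : 'rV[K]_6) : Prop :=
  w != 0 /\ forall k : 'I_3, dform (wS k) w w = 0.

Lemma onS_pi p : onS theta p <-> onSpi (p *m piMx).
Proof.
rewrite /onSpi; have -> : (p *m piMx != 0) = (p != 0).
  by rewrite mulmx_free_eq0 ?row_free_unit ?piMx_unit.
have e i : dform (wS i) (p *m piMx) (p *m piMx) =
   \sum_(j < 6) theta j ^+ i * omega theta j * piS theta p j ^+ 2.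
  by apply: eq_bigr => j _; rewrite !piMxE -mulrA -expr2.
by split => -[p0 hp]; split => // i; rewrite ?e // -e.
Qed.

(* By the Lagrange identity, every point with pi_j = +-1/omega_j lies on S. *)
Lemma signed_point_isotropic k (w : 'rV[K]_6) : (k < 3)%N ->
  (forall j, w 0 j ^+ 2 = (omega theta j)^-1 ^+ 2) -> dform (wS k) w w = 0.
Proof.
move=> hk hw; rewrite -[RHS](_ : (k == 5)%:R = 0); last by case: k hk => [|[|[|]]].
rewrite -sum_pow_omega ?(ltn_trans hk) //; apply: eq_bigr => j _.
rewrite -mulrA -expr2 hw /wS; field; exact: omega_neq0.
Qed.

Lemma dform_wS_shift (v u : 'rV[K]_6) :
  dform (wS 0) v (\row_i (theta i * u 0 i)) = dform (wS 1) v u.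
Proof. by apply: eq_bigr => i _; rewrite /wS mxE expr1 mul1r; ring. Qed.

Definition linPt (a b : K) : 'rV[K]_6 :=
  \row_i (if (i : nat) == 0%N then a else if (i : nat) == 1%N then b else 0).

Lemma linPt_Delta0 a b : (a != 0) || (b != 0) -> onDelta0 (linPt a b).
Proof.
move=> ab; split => [|[[|[|i]] hi] //= _]; last by rewrite mxE.
apply: contraTneq ab => /rowP h; move: (h ord0) (h (@Ordinal 6 1 isT)).
by rewrite !mxE /= => -> ->; rewrite eqxx.
Qed.

Lemma linPt_pi a b m : (linPt a b *m piMx) 0 m = (a + b * theta m) / omega theta m.
Proof.
rewrite piMxE /piS /Peval; congr (_ / _).
by rewrite !big_ord_recl big_ord0 !mxE /= expr0 expr1 mulr1 !mul0r !addr0.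
Qed.

Lemma inGLS_ratio_S {A B : 'M[K]_6} {x : 'rV[K]_6} : inGLS theta A -> inGLS theta B ->
  onS theta x -> onS theta (x *m (B *m invmx A)).
Proof.
move=> [hAu hA] [_ hB] /hB hx; apply/hA.
by rewrite mulmxA mulmxKV.
Qed.

Section Automorphism.
Variable H : 'M[K]_6.
Hypotheses (H_unit : H \in unitmx) (H_S : forall w, onSpi w -> onSpi (w *m H)).
Hypothesis char_neq2 : (2%:R : K) != 0.

(* Distinct rows of H are orthogonal for Q_0, Q_1, Q_2: polarize the images of
   the four points of S with pi = (+-1/omega_a, +-1/omega_b, 1/omega_j, ...). *)
Lemma H_rows_orth k a b : (k < 3)%N -> a != b ->
  dform (wS k) (row a H) (row b H) = 0.
Proof.
move=> hk hab; pose om j := (omega theta j)^-1.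
have om0 j : om j != 0 by rewrite invr_eq0 omega_neq0.
pose x : 'rV[K]_6 := om a *: delta_mx 0 a.
pose y : 'rV[K]_6 := om b *: delta_mx 0 b.
pose z : 'rV[K]_6 := \row_j (if (j == a) || (j == b) then 0 else om j).
suff : dform (wS k) (x *m H) (y *m H) = 0.
  rewrite -!scalemxAl -!rowE dformZl dformZr => /eqP.
  by rewrite !mulf_eq0 !(negbTE (om0 _)) => /eqP.
apply: (dform_orth_signs _ _ (z *m H) char_neq2) => s t /=.
rewrite !scalemxAl -!mulmxDl.
set u := z + _ + _.
have uE j : u 0 j ^+ 2 = om j ^+ 2.
  have hba : b != a by rewrite eq_sym.
  rewrite !mxE; case: (eqVneq j a) => [->|hja]; last case: (eqVneq j b) => [->|hjb];
    by rewrite /= ?(negbTE hab) ?(negbTE hba) ?mulr0 ?mulr1 ?add0r ?addr0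
               ?exprMn ?sqrr_sign ?mul1r.
have [_ /(_ (Ordinal hk)) //] : onSpi (u *m H).
apply: H_S; split => [|k']; last exact: signed_point_isotropic.
apply: contraTneq (om0 a) => u0.
by rewrite negbK -sqrf_eq0 -uE u0 mxE expr2 mulr0.
Qed.

(* Rows of H are not Q_0-isotropic, Q_0 being nondegenerate. *)
Lemma H_row_anisotropic b : dform (wS 0) (row b H) (row b H) != 0.
Proof.
apply: contraTneq isT => hb.
have rb0 : row b H = 0.
  apply: (dform_nondeg H _ wS0_neq0 H_unit) => d.
  by case: (eqVneq d b) => [->//|hdb]; exact: H_rows_orth.
move/eqP: rb0; rewrite rowE mulmx_free_eq0 ?row_free_unit // => /eqP/rowP/(_ b).
by rewrite !mxE !eqxx => /eqP; rewrite oner_eq0.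
Qed.

(* Each row ra of H has a single nonzero entry: diag(theta) ra is Q_0-orthogonal
   to the other rows (as ra is Q_1-orthogonal to them), so it is proportional
   to ra, and the theta_i are distinct. *)
Lemma H_row_support a j j' : H a j != 0 -> H a j' != 0 -> j = j'.
Proof.
move=> hj hj'; set ra := row a H.
pose lam := dform (wS 1) ra ra / dform (wS 0) ra ra.
have eigen : \row_i (theta i * ra 0 i) = lam *: ra.
  apply/eqP; rewrite -subr_eq0; apply/eqP.
  apply: (dform_nondeg H _ wS0_neq0 H_unit) => d.
  rewrite dformDr dformNr dformZr dform_wS_shift.
  case: (eqVneq d a) => [->|hda]; first by rewrite divfK ?H_row_anisotropic // subrr.
  by rewrite !H_rows_orth // mulr0 subrr.
have theta_lam i : H a i != 0 -> theta i = lam.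
  move=> hi; have := congr1 (fun w : 'rV_6 => w 0 i) eigen; rewrite !mxE.
  exact: mulIf.
by apply: theta_inj; rewrite !theta_lam.
Qed.

(* Distinct rows of H have disjoint supports, by Q_0-orthogonality. *)
Lemma H_col_support a b j : H a j != 0 -> H b j != 0 -> a = b.
Proof.
move=> haj hbj; apply/eqP; apply: contraT => hab.
have := H_rows_orth 0 a b isT hab.
rewrite /dform (bigD1 j) //= big1 => [|i hij]; last first.
  have -> : row a H 0 i = 0.
    by rewrite mxE; apply: contraNeq hij => hai; rewrite (H_row_support _ _ _ hai haj).
  by rewrite mulr0 mul0r.
rewrite addr0 !mxE /wS mul1r => /eqP.
by rewrite !mulf_eq0 (negbTE (omega_neq0 j)) (negbTE haj) (negbTE hbj).
Qed.

Hypothesis H_Delta0 : forall q, onDelta0 q ->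
  exists c, c != 0 /\ q *m piMx *m H = c *: (q *m piMx).

(* H is diagonal: the point X - theta_j of Delta_0 has pi_j = 0 as its only
   vanishing coordinate, and H, being monomial, must keep it so. *)
Lemma H_diagonal a j : a != j -> H a j = 0.
Proof.
move=> haj; apply: contraTeq haj => haj0; rewrite negbK.
have qj : onDelta0 (linPt (- theta j) 1) by apply: linPt_Delta0; rewrite oner_neq0 orbT.
have [c [_ hq]] := H_Delta0 _ qj.
have := congr1 (fun w : 'rV_6 => w 0 j) hq; rewrite /= [LHS]mxE [RHS]mxE.
rewrite linPt_pi mul1r addNr mul0r mulr0 (bigD1 a) //= big1 => [|b hba]; last first.
  have -> : H b j = 0.
    by apply: contraNeq hba => hbj; rewrite (H_col_support _ _ _ hbj haj0).
  by rewrite mulr0.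
rewrite addr0 linPt_pi mul1r => /eqP; rewrite !mulf_eq0 (negbTE haj0) orbF.
rewrite invr_eq0 (negbTE (omega_neq0 a)) orbF addrC subr_eq0.
by move=> /eqP /theta_inj ->.
Qed.

(* H is scalar: the point 1 of Delta_0 has all pi_j = 1/omega_j nonzero. *)
Lemma H_scalar : exists c, c != 0 /\ H = c%:M.
Proof.
have q0 : onDelta0 (linPt 1 0) by apply: linPt_Delta0; rewrite oner_neq0.
have [c [c0 hq]] := H_Delta0 _ q0.
exists c; split => //; apply/matrixP => a m; rewrite mxE.
case: eqVneq => [<-|ham] /=; last by rewrite H_diagonal.
have := congr1 (fun w : 'rV_6 => w 0 a) hq; rewrite /= [LHS]mxE [RHS]mxE.
rewrite (bigD1 a) //= big1 => [|b hba]; last by rewrite H_diagonal ?mulr0.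
rewrite addr0 linPt_pi mul0r addr0 mulrC => /mulIf; apply.
by rewrite mulf_neq0 ?oner_neq0 ?invr_eq0 ?omega_neq0.
Qed.

End Automorphism.
End Surface.

Arguments piMx {K} theta.
Arguments onSpi {K} theta w.

(* G = B A^-1 fixes Delta_0 and preserves S; its conjugate H = V^-1 G V by the
   pi-coordinates is therefore scalar, and so is G, i.e. p B = c (p A). *)
Theorem mainTheorem8 (K : closedFieldType) (f6 : K) (theta : 'I_6 -> K)
  (hchar : (2%:R : K) != 0) (hf6 : f6 != 0) (hdist : injective theta)
  (A B : 'M[K]_6) (hA : inGLS theta A) (hB : inGLS theta B)
  (hres : forall p : 'rV[K]_6, onDelta0 p -> projeq (p *m A) (p *m B)) :
  forall p : 'rV[K]_6, onS theta p -> projeq (p *m A) (p *m B).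
Proof.
move=> p _; set G := B *m invmx A; set V := piMx theta.
have V_unit : V \in unitmx := piMx_unit hdist.
pose H := invmx V *m G *m V.
have VH x : x *m V *m H = x *m G *m V by rewrite /H !mulmxA mulmxK.
have H_unit : H \in unitmx by rewrite !unitmx_mul !unitmx_inv V_unit hA.1 hB.1.
have H_S w : onSpi theta w -> onSpi theta (w *m H).
  rewrite -(mulmxKV V_unit w) VH => /(onS_pi hdist) hw.
  by apply/(onS_pi hdist); exact: inGLS_ratio_S hA hB hw.
have H_Delta0 q : onDelta0 q -> exists c, c != 0 /\ q *m V *m H = c *: (q *m V).
  move=> /hres [c [c0 hq]]; exists c; split => //.
  by rewrite VH /G mulmxA hq -!scalemxAl mulmxK ?hA.1.
have [c [c0 Hc]] := H_scalar hdist _ H_unit H_S hchar H_Delta0.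
have G_scalar : G = c%:M.
  have -> : G = V *m (H *m invmx V) by rewrite /H mulmxK // mulKVmx.
  by rewrite Hc mul_scalar_mx -scalemxAr mulmxV // scalemx1.
exists c; split => //.
have -> : p *m B = p *m G *m A by rewrite /G mulmxA mulmxKV ?hA.1.
by rewrite G_scalar mul_mx_scalar scalemxAl.
Qed.
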